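(* Let $\sigma$ be an implicit signature, $\mathsf V$ a pseudovariety of finite semigroups and $X$ a finite alphabet. (i) If $L\subseteq\Omega^\sigma_X\mathsf V$ satisfies $\overline{L^+}=\langle L\rangle_\sigma$, then also $\overline{L^+}=\langle\overline L\rangle_\sigma$. (ii) If $\mathsf V$ is a LERF pseudovariety of groups and $\sigma=\kappa$, then $\overline{L^+}=\langle L\rangle_\kappa$ for every rational subset $L$ of $\Omega^\kappa_X\mathsf V$. Here closures are taken in $\Omega^\sigma_X\mathsf V$.
   Context: $\overline{\Omega}_X\mathsf V$ is the free pro-$\mathsf V$ semigroup on $X$; an implicit signature is a set of implicit operations of finite arity containing multiplication; $\Omega^\sigma_X\mathsf V$ is the subalgebra of $\overline{\Omega}_X\mathsf V$ generated by $X$ under the operations of $\sigma$, with the topology induced from $\overline{\Omega}_X\mathsf V$; $\langle U\rangle_\sigma$ is the $\sigma$-subalgebra generated by $U$. $\kappa$ consists of multiplication and the $(\omega-1)$-power; for a pseudovariety of groups $\mathsf H$, $\Omega^\kappa_X\mathsf H$ is a group in which $x^{\omega-1}$ is the inverse of $x$. A pseudovariety of groups $\mathsf H$ is LERF if for every finite alphabet $X$, every finitely generated subgroup of the relatively free group $\Omega^\kappa_X\mathsf H$ is closed (in its pro-$\mathsf H$ topology, induced from $\overline{\Omega}_X\mathsf H$). *)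

From mathcomp Require Import all_boot.
From Stdlib Require Import FunctionalExtensionality.

Set Implicit Arguments.
Unset Strict Implicit.
Unset Printing Implicit Defensive.

(* Finite (nonempty) semigroups, coded on carriers 'I_n.+1.           *)
(* Every finite semigroup is isomorphic to such a code; pseudovarieties *)
(* below are required to be closed under isomorphism (via sub/quot).  *)
Record FinSg := {
  sg_n : nat;
  sg_mul : 'I_sg_n.+1 -> 'I_sg_n.+1 -> 'I_sg_n.+1;
  sg_assoc : associative sg_mul }.

Definition car (S : FinSg) : Type := 'I_(sg_n S).+1.
Definition smul (S : FinSg) : car S -> car S -> car S := @sg_mul S.

Definition is_hom (S T : FinSg) (f : car S -> car T) : Prop :=
  forall x y, f (smul x y) = smul (f x) (f y).

Definition triv_mul (x y : 'I_1) : 'I_1 := x.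
Lemma triv_assoc : associative triv_mul. Proof. by []. Qed.
Definition trivSg : FinSg := @Build_FinSg 0 triv_mul triv_assoc.

(* pseudovariety of finite semigroups: contains the trivial semigroup
   (empty product), closed under subsemigroups, homomorphic images and
   binary direct products (all up to isomorphism). *)
Definition pseudovariety (V : FinSg -> Prop) : Prop :=
  [/\ V trivSg,
      (forall (S T : FinSg) (f : car S -> car T),
          is_hom f -> injective f -> V T -> V S),
      (forall (S T : FinSg) (f : car S -> car T),
          is_hom f -> (forall y, exists x, f x = y) -> V S -> V T) &
      (forall (S T U : FinSg) (p : car U -> car S) (q : car U -> car T),
          is_hom p -> is_hom q ->
          (forall s t, exists u, p u = s /\ q u = t) ->
          (forall u u', p u = p u' -> q u = q u' -> u = u') ->
          V S -> V T -> V U)].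

Definition is_group (S : FinSg) : Prop :=
  exists e : car S, (forall x, smul e x = x /\ smul x e = x) /\
    (forall x, exists y, smul x y = e /\ smul y x = e).

Definition group_pseudovariety (V : FinSg -> Prop) : Prop :=
  pseudovariety V /\ forall S, V S -> is_group S.

Record IOp (n : nat) := {
  iop : forall S : FinSg, ('I_n -> car S) -> car S;
  iop_nat : forall (S T : FinSg) (f : car S -> car T), is_hom f ->
      forall a, f (iop a) = iop (fun i => f (a i)) }.
Arguments iop {n} i S a.

Definition is_mul_op n (o : IOp n) : Prop :=
  n = 2 /\ forall (S : FinSg) (x y : car S),
    iop o S (fun i : 'I_n => nth x [:: x; y] i) = smul x y.

(* x^(k+1) *)
Fixpoint spow (S : FinSg) (x : car S) (k : nat) : car S :=
  if k is k'.+1 then smul x (spow x k') else x.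

(* x^(omega-1) = x^(2N-1) with N = |S|! (so x^N = x^omega) *)
Definition omega_m1 (S : FinSg) (x : car S) : car S :=
  spow x (2 * (sg_n S).+1`! - 2).

Definition is_omega_m1_op n (o : IOp n) : Prop :=
  n = 1 /\ forall (S : FinSg) (x : car S), iop o S (fun _ => x) = omega_m1 x.

Definition implicit_signature (sigma : forall n, IOp n -> Prop) : Prop :=
  exists n (o : IOp n), sigma n o /\ is_mul_op o.

Definition kappa : forall n, IOp n -> Prop :=
  fun n o => is_mul_op o \/ is_omega_m1_op o.

(* The free pro-V semigroup on X, as the X-ary implicit operations on V: *)
(* natural families w_S : S^X -> S, S in V.                           *)
Record PV (V : FinSg -> Prop) (X : Type) := {
  ev : forall S : FinSg, V S -> (X -> car S) -> car S;
  ev_nat : forall (S T : FinSg) (hS : V S) (hT : V T) (f : car S -> car T),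
      is_hom f -> forall phi, f (ev hS phi) = ev hT (fun x => f (phi x)) }.
Arguments ev {V X} p {S} hS phi.

Section ProV.
Variables (V : FinSg -> Prop) (X : Type).

Definition pv_gen (x : X) : PV V X.
Proof.
refine (@Build_PV V X (fun S _ phi => phi x) _).
by [].
Defined.

Definition pv_mul (u v : PV V X) : PV V X.
Proof.
refine (@Build_PV V X (fun S hS phi => smul (ev u hS phi) (ev v hS phi)) _).
move=> S T hS hT f hf phi; by rewrite (hf _ _) (ev_nat u hS hT hf) (ev_nat v hS hT hf).
Defined.

Definition pv_op n (o : IOp n) (w : 'I_n -> PV V X) : PV V X.
Proof.
refine (@Build_PV V X (fun S hS phi => iop o S (fun i => ev (w i) hS phi)) _).
move=> S T hS hT f hf phi; rewrite (iop_nat o hf); apply: f_equal.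
by apply: functional_extensionality => i; rewrite (ev_nat (w i) hS hT hf).
Defined.

Inductive OmegaS (sigma : forall n, IOp n -> Prop) : PV V X -> Prop :=
  | OS_gen x : OmegaS sigma (pv_gen x)
  | OS_op n (o : IOp n) (w : 'I_n -> PV V X) :
      sigma n o -> (forall i, OmegaS sigma (w i)) -> OmegaS sigma (pv_op o w).

Inductive genS (sigma : forall n, IOp n -> Prop) (U : PV V X -> Prop)
    : PV V X -> Prop :=
  | GS_base w : U w -> genS sigma U w
  | GS_op n (o : IOp n) (w : 'I_n -> PV V X) :
      sigma n o -> (forall i, genS sigma U (w i)) -> genS sigma U (pv_op o w).

Inductive splus (L : PV V X -> Prop) : PV V X -> Prop :=
  | SP_base w : L w -> splus L w
  | SP_mul u v : splus L u -> splus L v -> splus L (pv_mul u v).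

(* points (S, phi) with S in V: each gives the continuous projection
   w |-> w_S(phi) onto the discrete finite semigroup S *)
Record VPt := { vS : FinSg; vV : V vS; vphi : X -> car vS }.

(* closure of A inside the subspace Omega^sigma_X V, for the pro-V
   topology (initial topology of the projections w |-> w_S(phi)):
   every basic neighbourhood (finite intersection) of w meets A *)
Definition clos (sigma : forall n, IOp n -> Prop) (A : PV V X -> Prop)
    (w : PV V X) : Prop :=
  OmegaS sigma w /\
  forall (k : nat) (p : 'I_k -> VPt),
    exists a, A a /\ OmegaS sigma a /\
      forall i, ev a (vV (p i)) (vphi (p i)) = ev w (vV (p i)) (vphi (p i)).

Inductive rationalK : (PV V X -> Prop) -> Prop :=
  | RK_empty : rationalK (fun _ => False)
  | RK_single a : OmegaS kappa a -> rationalK (fun w => w = a)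
  | RK_union A B : rationalK A -> rationalK B -> rationalK (fun w => A w \/ B w)
  | RK_prod A B : rationalK A -> rationalK B ->
      rationalK (fun w => exists u v, A u /\ B v /\ w = pv_mul u v)
  | RK_plus A : rationalK A -> rationalK (splus A)
  | RK_ext A B : rationalK A -> (forall w, A w <-> B w) -> rationalK B.

End ProV.

Definition set_eq (T : Type) (A B : T -> Prop) : Prop := forall w, A w <-> B w.

(* subgroup of the group Omega^kappa_X V generated by F: the kappa-subalgebra
   generated by F together with the identity (the idempotent of
   Omega^kappa_X V); in a group kappa = {product, inverse}. *)
Definition fg_subgroup (V : FinSg -> Prop) (X : Type) (k : nat)
    (F : 'I_k -> PV V X) : PV V X -> Prop :=
  genS kappa (fun w => (exists i, w = F i) \/
                       (OmegaS kappa w /\ pv_mul w w = w)).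

Definition LERF (V : FinSg -> Prop) : Prop :=
  forall (X : finType) (k : nat) (F : 'I_k -> PV V X),
    (forall i, OmegaS kappa (F i)) ->
    forall w, clos kappa (fg_subgroup F) w -> fg_subgroup F w.

From mathcomp Require Import all_boot zify.
From Stdlib Require Import FunctionalExtensionality ProofIrrelevance Classical.

Set Implicit Arguments.
Unset Strict Implicit.
Unset Printing Implicit Defensive.

(* (i) L lies in its closure, which lies in the closure of L^+, that is in <L>; hence
   <L> <= <cl L> <= <L>.
   (ii) The closure of L^+ is closed under kappa: products of limits are limits of products,
   and u^(omega-1) agrees with u^(2M-1) on finitely many finite semigroups S_i as soon as
   every |S_i|! divides M; hence <L>_kappa is contained in it. Conversely, for rational L in
   the group Omega^kappa_X V, induction on rational expressions gives a finite F with
   <F> = <L^-1 L> (add a^-1 b for a union, conjugate by an element b of the right factor for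
   a product, add a for L^+). Fixing a in L, L^+ lies in the finitely generated subgroup
   <a, F>, which is contained in <L>_kappa and is closed by LERF. *)

Lemma smulA (S : FinSg) : associative (@smul S).
Proof. exact: sg_assoc. Qed.

Lemma spowD (S : FinSg) (x : car S) a b :
  smul (spow x a) (spow x b) = spow x (a + b).+1.
Proof. by elim: a => [|a IHa] //=; rewrite -smulA IHa. Qed.

Lemma spow_morph (S T : FinSg) (f : car S -> car T) x k :
  is_hom f -> f (spow x k) = spow (f x) k.
Proof. by move=> hf; elim: k => [|k IHk] //=; rewrite hf IHk. Qed.

Lemma spow_eventually_periodic (S : FinSg) (x : car S) :
  exists i p, [/\ 0 < p <= (sg_n S).+1, i <= sg_n S &
    forall k, i <= k -> spow x (k + p) = spow x k].
Proof.
pose g (k : 'I_(sg_n S).+2) : car S := spow x k.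
have /injectivePn [j [k neq_jk eq_gjk]] : ~~ injectiveb g.
  by apply/injectiveP => /leq_card; rewrite !card_ord ltnn.
wlog lt_jk : j k neq_jk eq_gjk / j < k.
  move=> IH; case: (ltngtP j k) => [|lt_kj|/val_inj eq_jk]; first exact: IH.
  - by apply: (IH k j) => //; rewrite eq_sym.
  - by rewrite eq_jk eqxx in neq_jk.
exists j, (k - j); split; [have := ltn_ord k; lia | have := ltn_ord k; lia |].
move=> m le_jm; rewrite -(subnKC le_jm).
elim: (m - j) => [|d IHd]; first by rewrite addn0 subnKC 1?ltnW.
have -> : j + d.+1 + (k - j) = (j + d + (k - j)).+1 by lia.
by rewrite /= IHd addnS.
Qed.

Lemma spow_add_period (S : FinSg) (x : car S) j k :
  sg_n S <= j -> (sg_n S).+1`! %| k -> spow x (j + k) = spow x j.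
Proof.
have [i [p [p_range le_i per]]] := spow_eventually_periodic x.
move=> le_j /(dvdn_trans (dvdn_fact p_range)) /dvdnP [m ->].
elim: m => [|m IHm]; first by rewrite addn0.
by rewrite mulSnr addnA per ?IHm //; lia.
Qed.

Lemma omega_m1_morph (S T : FinSg) (f : car S -> car T) x :
  is_hom f -> f (omega_m1 x) = omega_m1 (f x).
Proof.
move=> hf; rewrite /omega_m1.
set NS := (sg_n S).+1`!; set NT := (sg_n T).+1`!.
have NS_ge : (sg_n S).+1 <= NS by exact: fact_geq.
have NT_ge : (sg_n T).+1 <= NT by exact: fact_geq.
have NS_dvd : (sg_n S).+1`! %| NS * (2 * NT - 2) by exact: dvdn_mulr.
have NT_dvd : (sg_n T).+1`! %| NT * (2 * NS - 2) by exact: dvdn_mulr.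
clearbody NS NT.
(* On the powers of f x, both exponents can be replaced by 2 NS NT - 2: via the period of x
   in S on the left, via the period of f x in T on the right. *)
rewrite -(spow_add_period x _ NS_dvd) ?spow_morph //; last lia.
rewrite -[in RHS](spow_add_period (f x) _ NT_dvd); last lia.
congr spow; nia.
Qed.

(* In a group x^(omega-1) x is the identity for every x; ord0 is an arbitrary choice. *)
Definition sg_one (S : FinSg) : car S := smul (omega_m1 (ord0 : car S)) ord0.

Lemma group_sg_one (S : FinSg) : is_group S ->
  [/\ forall x : car S, smul (sg_one S) x = x,
      forall x : car S, smul x (sg_one S) = x,
      forall x : car S, smul (omega_m1 x) x = sg_one S &
      forall x : car S, smul x (omega_m1 x) = sg_one S].
Proof.
case=> e [unit_e inv_e].
have lcancel (a b c : car S) : smul a b = smul a c -> b = c.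
  case: (inv_e a) => a' [_ a'a] abc.
  by rewrite -(proj1 (unit_e b)) -(proj1 (unit_e c)) -a'a -!smulA abc.
set N := (sg_n S).+1`!; have N_gt0 : 0 < N := fact_gt0 _.
have omega_inv (x : car S) : smul (omega_m1 x) x = e /\ smul x (omega_m1 x) = e.
  have xN : spow x N.-1 = e.
    apply: (@lcancel (spow x (sg_n S))); rewrite (proj2 (unit_e _)) spowD.
    by rewrite -addnS prednK // spow_add_period.
  have -> : e = spow x (N.-1 + N.-1).+1 by rewrite -spowD xN (proj1 (unit_e e)).
  rewrite /omega_m1 -/N; split.
    by rewrite -{2}[x]/(spow x 0) spowD; congr spow; lia.
  by rewrite -[smul x _]/(spow x (2 * N - 2).+1); congr spow; lia.
have -> : sg_one S = e by exact: (proj1 (omega_inv _)).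
by split=> x; [exact: (proj1 (unit_e x)) | exact: (proj2 (unit_e x))
              | exact: (proj1 (omega_inv x)) | exact: (proj2 (omega_inv x))].
Qed.

Definition mul_iop : IOp 2.
Proof.
refine (@Build_IOp 2 (fun S a => smul (a ord0) (a ord_max)) _).
by move=> S T f hf a; rewrite hf.
Defined.

Definition omega_m1_iop : IOp 1.
Proof.
refine (@Build_IOp 1 (fun S a => omega_m1 (a ord0)) _).
by move=> S T f hf a; rewrite omega_m1_morph.
Defined.

Lemma kappa_mul_iop : kappa mul_iop.
Proof. by left. Qed.

Lemma kappa_omega_m1_iop : kappa omega_m1_iop.
Proof. by right. Qed.

Lemma kappa_iopP n (o : IOp n) : kappa o ->
  (exists i j : 'I_n, forall S a, iop o S a = smul (a i) (a j)) \/
  (exists i : 'I_n, forall S a, iop o S a = omega_m1 (a i)).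
Proof.
case=> [[n2 o_mul]|[n1 o_om]]; subst n; [left; exists ord0, ord_max | right; exists ord0].
- move=> S a; rewrite -o_mul; congr iop.
  by apply: functional_extensionality => -[[|[|i]] lt_i2] //=; congr a; apply: val_inj.
- move=> S a; rewrite -o_om; congr iop.
  by apply: functional_extensionality => -[[|i] lt_i1] //=; congr a; apply: val_inj.
Qed.

Lemma nth_In_ord (T : Type) (s : seq T) x0 (i : 'I_(size s)) : List.In (nth x0 s i) s.
Proof. by case: i; elim: s => [|x s IHs] [|i] //= lt_is; [left | right; exact: IHs]. Qed.

Lemma In_nth_ord (T : Type) (s : seq T) x0 x :
  List.In x s -> exists i : 'I_(size s), x = nth x0 s i.
Proof.
elim: s => [|y s IHs] //= [<- | /IHs [i ->]]; first by exists ord0.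
by exists (lift ord0 i).
Qed.

Section FreeProV.
Variables (V : FinSg -> Prop) (X : Type).
Local Notation PVX := (PV V X).
Local Notation "u ** v" := (pv_mul u v) (at level 40, left associativity).

Lemma pv_ext (u v : PVX) :
  (forall S (hS : V S) phi, ev u hS phi = ev v hS phi) -> u = v.
Proof.
case: u v => [eu nu] [ev' nv] /= euv.
have E : eu = ev'.
  do 2!apply: functional_extensionality_dep => ?.
  by apply: functional_extensionality => phi; apply: euv.
by subst ev'; congr Build_PV; apply: proof_irrelevance.
Qed.

Lemma pv_mulgA (u v w : PVX) : u ** (v ** w) = u ** v ** w.
Proof. by apply: pv_ext => S hS phi /=; rewrite smulA. Qed.

Definition pv_inv (u : PVX) : PVX.
Proof.
refine (@Build_PV V X (fun S hS phi => omega_m1 (ev u hS phi)) _).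
by move=> S T hS hT f hf phi; rewrite omega_m1_morph // (ev_nat u hS hT hf).
Defined.

Fixpoint pv_pow (u : PVX) (k : nat) : PVX :=
  if k is k'.+1 then u ** pv_pow u k' else u.

Lemma ev_pv_pow u k S (hS : V S) phi :
  ev (pv_pow u k) hS phi = spow (ev u hS phi) k.
Proof. by elim: k => [|k IHk] //=; rewrite IHk. Qed.

Lemma pv_pow_closed (Q : PVX -> Prop) u k :
  (forall v w, Q v -> Q w -> Q (v ** w)) -> Q u -> Q (pv_pow u k).
Proof. by move=> mulQ Qu; elim: k => [|k IHk] //=; exact: mulQ. Qed.

Lemma splus_closed (Q : PVX -> Prop) (L : PVX -> Prop) :
  (forall v w, Q v -> Q w -> Q (v ** w)) -> (forall w, L w -> Q w) ->
  forall w, splus L w -> Q w.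
Proof. by move=> mulQ LQ w; elim=> [v /LQ|v v' _ Qv _ Qv'] //; exact: mulQ. Qed.

Definition kappa_closed (Q : PVX -> Prop) : Prop :=
  forall n (o : IOp n) (w : 'I_n -> PVX),
    kappa o -> (forall i, Q (w i)) -> Q (pv_op o w).

Lemma kappa_closed_mul Q u v : kappa_closed Q -> Q u -> Q v -> Q (u ** v).
Proof.
move=> kQ Qu Qv; have -> : u ** v = pv_op mul_iop (fun i => nth u [:: u; v] i).
  exact: pv_ext.
by apply: kQ => [|[[|[|i]] ?]]; first exact: kappa_mul_iop.
Qed.

Lemma kappa_closed_inv Q u : kappa_closed Q -> Q u -> Q (pv_inv u).
Proof.
move=> kQ Qu; have -> : pv_inv u = pv_op omega_m1_iop (fun _ => u) by exact: pv_ext.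
by apply: kQ => //; exact: kappa_omega_m1_iop.
Qed.

Lemma kappa_closed_OmegaS : kappa_closed (OmegaS kappa).
Proof. by move=> n o w; exact: OS_op. Qed.

Lemma kappa_closed_genS P : kappa_closed (genS kappa P).
Proof. by move=> n o w; exact: GS_op. Qed.

Lemma rationalK_OmegaS (L : PVX -> Prop) : rationalK L -> forall w, L w -> OmegaS kappa w.
Proof.
elim=> [|a Oa|A B _ OA _ OB|A B _ OA _ OB|A _ OA|A B _ OA AB] w //.
- by move=> ->.
- by case=> [/OA|/OB].
- by case=> [u [v [/OA Ou [/OB Ov ->]]]]; exact: kappa_closed_mul kappa_closed_OmegaS Ou Ov.
- by apply: (splus_closed _ OA) => u v; exact: kappa_closed_mul kappa_closed_OmegaS.
- by move/AB/OA.
Qed.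

Lemma genS_min (sigma : forall n, IOp n -> Prop) (P Q : PVX -> Prop) :
  (forall w, P w -> genS sigma Q w) -> forall w, genS sigma P w -> genS sigma Q w.
Proof. by move=> PQ w; elim=> [v /PQ|n o v so _ IHv] //; exact: GS_op. Qed.

End FreeProV.

Arguments kappa_closed_OmegaS {V X}.
Arguments kappa_closed_genS {V X} P.

Lemma omega_m1_spow (S : FinSg) (x : car S) M :
  0 < M -> (sg_n S).+1`! %| M -> omega_m1 x = spow x (2 * M - 2).
Proof.
set N := (sg_n S).+1`!; move=> M_gt0 N_M.
have N_le : (sg_n S).+1 <= N := fact_geq _.
have le_NM : N <= M := dvdn_leq M_gt0 N_M.
have N_2MN : N %| 2 * (M - N) by rewrite dvdn_mull // dvdn_sub.
by rewrite /omega_m1 -/N -(spow_add_period x _ N_2MN); [congr spow | ]; lia.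
Qed.

Section Closure.
Variables (V : FinSg -> Prop) (X : Type).
Local Notation PVX := (PV V X).
Local Notation "u ** v" := (pv_mul u v) (at level 40, left associativity).

Lemma clos_self (sigma : forall n, IOp n -> Prop) (A : PVX -> Prop) w :
  OmegaS sigma w -> A w -> clos sigma A w.
Proof. by move=> Ow Aw; split=> // k p; exists w. Qed.

Lemma clos_mono (sigma : forall n, IOp n -> Prop) (A B : PVX -> Prop) :
  (forall w, A w -> B w) -> forall w, clos sigma A w -> clos sigma B w.
Proof.
move=> AB w [Ow approx]; split=> // k p.
by have [a [/AB Ba Oa]] := approx k p; exists a.
Qed.

Lemma clos_splus_genS_clos (sigma : forall n, IOp n -> Prop) (L : PVX -> Prop) :
  (forall w, L w -> OmegaS sigma w) ->
  set_eq (clos sigma (splus L)) (genS sigma L) ->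
  set_eq (clos sigma (splus L)) (genS sigma (clos sigma L)).
Proof.
move=> LO closE w; rewrite closE; split; apply: genS_min => v.
- by move=> Lv; apply: GS_base; apply: clos_self (LO _ Lv) Lv.
- by move/(clos_mono (@SP_base _ _ L)); rewrite closE.
Qed.

Lemma dvdn_fact_prod k (p : 'I_k -> VPt V X) i :
  (sg_n (vS (p i))).+1`! %| \prod_(j < k) (sg_n (vS (p j))).+1`!.
Proof. by rewrite (bigD1 i) //= dvdn_mulr. Qed.

Lemma clos_splus_kappa_closed (L : PVX -> Prop) :
  (forall w, L w -> OmegaS kappa w) -> kappa_closed (clos kappa (splus L)).
Proof.
move=> LO n o u ko closu; split.
  by apply: OS_op => // i; case: (closu i).
move=> k p; case: (kappa_iopP ko) => [[i [j o_mul]] | [i o_om]].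
- have [a [La [Oa ea]]] := proj2 (closu i) k p.
  have [b [Lb [Ob eb]]] := proj2 (closu j) k p.
  exists (a ** b); split; first exact: SP_mul.
  split; first exact: kappa_closed_mul kappa_closed_OmegaS Oa Ob.
  by move=> l /=; rewrite o_mul ea eb.
- have [a [La [Oa ea]]] := proj2 (closu i) k p.
  pose M := \prod_(j < k) (sg_n (vS (p j))).+1`!.
  exists (pv_pow a (2 * M - 2)); split; first exact: pv_pow_closed _ (@SP_mul _ _ L) La.
  split.
    by apply: pv_pow_closed Oa => ? ?; exact: kappa_closed_mul kappa_closed_OmegaS.
  move=> l /=; rewrite o_om ev_pv_pow ea (@omega_m1_spow _ _ M) //.
    by apply: prodn_gt0 => j; exact: fact_gt0.
  exact: dvdn_fact_prod.
Qed.

Lemma genS_sub_clos_splus (L : PVX -> Prop) :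
  (forall w, L w -> OmegaS kappa w) ->
  forall w, genS kappa L w -> clos kappa (splus L) w.
Proof.
move=> LO w; elim=> [v Lv | n o v ko _ IHv].
- by apply: clos_self (LO _ Lv) (SP_base Lv).
- exact: clos_splus_kappa_closed.
Qed.

End Closure.

Section Subgroups.
Variables (V : FinSg -> Prop) (X : Type).
Hypothesis V_group : forall S, V S -> is_group S.
Local Notation PVX := (PV V X).
Local Notation "u ** v" := (pv_mul u v) (at level 40, left associativity).
Local Notation inv := (@pv_inv V X).

Definition pv_one : PVX.
Proof.
refine (@Build_PV V X (fun S _ _ => sg_one S) _).
move=> S T hS hT f hf phi; rewrite /sg_one hf omega_m1_morph //.
by case: (group_sg_one (V_group hT)).
Defined.

Lemma pv_mul1g (u : PVX) : pv_one ** u = u.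
Proof. by apply: pv_ext => S hS phi /=; case: (group_sg_one (V_group hS)). Qed.

Lemma pv_mulg1 (u : PVX) : u ** pv_one = u.
Proof. by apply: pv_ext => S hS phi /=; case: (group_sg_one (V_group hS)). Qed.

Lemma pv_mulVg (u : PVX) : inv u ** u = pv_one.
Proof. by apply: pv_ext => S hS phi /=; case: (group_sg_one (V_group hS)). Qed.

Lemma pv_mulgV (u : PVX) : u ** inv u = pv_one.
Proof. by apply: pv_ext => S hS phi /=; case: (group_sg_one (V_group hS)). Qed.

Lemma pv_mulKVg (u v : PVX) : u ** (inv u ** v) = v.
Proof. by rewrite pv_mulgA pv_mulgV pv_mul1g. Qed.

Lemma pv_mulKg (u v : PVX) : inv u ** (u ** v) = v.
Proof. by rewrite pv_mulgA pv_mulVg pv_mul1g. Qed.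

Lemma pv_mulgK (u v : PVX) : u ** v ** inv v = u.
Proof. by rewrite -pv_mulgA pv_mulgV pv_mulg1. Qed.

Lemma pv_inv_unique (u v : PVX) : u ** v = pv_one -> v = inv u.
Proof. by move=> uv; rewrite -(pv_mulKg u v) uv pv_mulg1. Qed.

Lemma pv_invgK (u : PVX) : inv (inv u) = u.
Proof. by apply/esym/pv_inv_unique; rewrite pv_mulVg. Qed.

Lemma pv_invMg (u v : PVX) : inv (u ** v) = inv v ** inv u.
Proof. by apply/esym/pv_inv_unique; rewrite -pv_mulgA pv_mulKVg pv_mulgV. Qed.

Lemma pv_idem_one (u : PVX) : u ** u = u -> u = pv_one.
Proof. by move=> uu; rewrite -(pv_mulVg u) -{3}uu pv_mulKg. Qed.

Lemma kappa_closed_one (Q : PVX -> Prop) u :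
  kappa_closed Q -> Q u -> Q pv_one.
Proof.
move=> kQ Qu; rewrite -(pv_mulVg u).
exact: kappa_closed_mul kQ (kappa_closed_inv kQ Qu) Qu.
Qed.

Inductive subgrp (P : PVX -> Prop) : PVX -> Prop :=
  | subgrp_gen w : P w -> subgrp P w
  | subgrp_one : subgrp P pv_one
  | subgrp_mul u v : subgrp P u -> subgrp P v -> subgrp P (u ** v)
  | subgrp_inv u : subgrp P u -> subgrp P (inv u).

Local Notation subgrp_seq F := (subgrp (fun w => List.In w F)).

Lemma subgrp_min (P Q : PVX -> Prop) : kappa_closed Q -> Q pv_one ->
  (forall w, P w -> Q w) -> forall w, subgrp P w -> Q w.
Proof.
move=> kQ Q1 PQ w; elim=> [v /PQ | | u v _ Qu _ Qv | u _ Qu] //.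
- exact: kappa_closed_mul.
- exact: kappa_closed_inv.
Qed.

Lemma subgrp_bind (P Q : PVX -> Prop) :
  (forall w, P w -> subgrp Q w) -> forall w, subgrp P w -> subgrp Q w.
Proof.
move=> PQ w; elim=> [v /PQ | | u v _ Qu _ Qv | u _ Qu] //.
- exact: subgrp_one.
- exact: subgrp_mul.
- exact: subgrp_inv.
Qed.

Lemma subgrp_mono (P Q : PVX -> Prop) :
  (forall w, P w -> Q w) -> forall w, subgrp P w -> subgrp Q w.
Proof. by move=> PQ; apply: subgrp_bind => w /PQ; exact: subgrp_gen. Qed.

Lemma subgrp_seq_catl (F G : seq PVX) w : subgrp_seq F w -> subgrp_seq (F ++ G) w.
Proof. by apply: subgrp_mono => v Fv; apply: List.in_or_app; left. Qed.

Lemma subgrp_seq_catr (F G : seq PVX) w : subgrp_seq G w -> subgrp_seq (F ++ G) w.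
Proof. by apply: subgrp_mono => v Gv; apply: List.in_or_app; right. Qed.

Definition pv_conj (c u : PVX) : PVX := inv c ** u ** c.

Lemma subgrp_conj (P : PVX -> Prop) c u : subgrp P u ->
  subgrp (fun w => exists2 v, P v & w = pv_conj c v) (pv_conj c u).
Proof.
elim=> {u} [u Pu | | u v _ cu _ cv | u _ cu].
- by apply: subgrp_gen; exists u.
- by rewrite /pv_conj pv_mulg1 pv_mulVg; exact: subgrp_one.
- have -> : pv_conj c (u ** v) = pv_conj c u ** pv_conj c v.
    by rewrite /pv_conj !pv_mulgA pv_mulgK.
  exact: subgrp_mul.
- have -> : pv_conj c (inv u) = inv (pv_conj c u).
    by rewrite /pv_conj !pv_invMg pv_invgK pv_mulgA.
  exact: subgrp_inv.
Qed.

Definition quot (A : PVX -> Prop) (w : PVX) : Prop :=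
  exists x y, [/\ A x, A y & w = inv x ** y].

Definition quot_fg (A : PVX -> Prop) : Prop :=
  exists F : seq PVX, (forall f, List.In f F -> subgrp (quot A) f) /\
    forall x y, A x -> A y -> subgrp_seq F (inv x ** y).

Lemma subgrp_quot_mono (A B : PVX -> Prop) : (forall w, A w -> B w) ->
  forall w, subgrp (quot A) w -> subgrp (quot B) w.
Proof.
by move=> AB; apply: subgrp_mono => w [x [y [/AB Bx /AB By ->]]]; exists x, y.
Qed.

Lemma subgrp_quot_sub (A Q : PVX -> Prop) a : kappa_closed Q -> A a ->
  (forall w, A w -> Q w) -> forall w, subgrp (quot A) w -> Q w.
Proof.
move=> kQ Aa AQ; apply: subgrp_min => //; first exact: kappa_closed_one (AQ _ Aa).
by move=> w [x [y [/AQ Qx /AQ Qy ->]]]; apply: kappa_closed_mul (kappa_closed_inv _ _) _.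
Qed.

Lemma splus_inhabited (A : PVX -> Prop) w : splus A w -> exists a, A a.
Proof. by elim=> [v Av | *] //; exists v. Qed.

Lemma splus_sub_subgrp_cons (A : PVX -> Prop) (F : seq PVX) a : A a ->
  (forall x y, A x -> A y -> subgrp_seq F (inv x ** y)) ->
  forall w, splus A w -> subgrp_seq (a :: F) w.
Proof.
move=> Aa quot_F; apply: splus_closed => [u v|x Ax]; first exact: subgrp_mul.
rewrite -(pv_mulKVg a x); apply: subgrp_mul; first by apply: subgrp_gen; left.
by apply: subgrp_mono (quot_F _ _ Aa Ax) => w; right.
Qed.

Lemma quot_fg_ext (A B : PVX -> Prop) : set_eq A B -> quot_fg A -> quot_fg B.
Proof.
move=> AB [F [F_quot quot_F]]; exists F; split.
- by move=> f /F_quot; apply: subgrp_quot_mono => w /AB.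
- by move=> x y /AB Ax /AB Ay; exact: quot_F.
Qed.

Lemma quot_fg_empty (A : PVX -> Prop) : (forall w, ~ A w) -> quot_fg A.
Proof. by move=> A0; exists [::]; split=> // x y /A0. Qed.

Lemma quot_fg_single a : quot_fg (fun w => w = a).
Proof. by exists [::]; split=> // x y -> ->; rewrite pv_mulVg; exact: subgrp_one. Qed.

Lemma quot_fg_union (A B : PVX -> Prop) :
  quot_fg A -> quot_fg B -> quot_fg (fun w => A w \/ B w).
Proof.
move=> fgA fgB.
have [[a Aa] | noA] := classic (exists a, A a); last first.
  apply: (quot_fg_ext _ fgB) => w.
  by split=> [Bw | [Aw|] //]; [right | case: noA; exists w].
have [[b Bb] | noB] := classic (exists b, B b); last first.
  apply: (quot_fg_ext _ fgA) => w.
  by split=> [Aw | [|Bw] //]; [left | case: noB; exists w].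
have [FA [FA_quot quot_FA]] := fgA; have [FB [FB_quot quot_FB]] := fgB.
exists (FA ++ FB ++ [:: inv a ** b]); split.
  move=> f /List.in_app_iff [/FA_quot | /List.in_app_iff [/FB_quot | [<- | []]]].
  - by apply: subgrp_quot_mono => w; left.
  - by apply: subgrp_quot_mono => w; right.
  - by apply: subgrp_gen; exists a, b; split; [left | right |].
have across x y : A x -> B y -> subgrp_seq (FA ++ FB ++ [:: inv a ** b]) (inv x ** y).
  move=> Ax By.
  have -> : inv x ** y = inv x ** a ** (inv a ** b) ** (inv b ** y).
    by rewrite -!pv_mulgA !pv_mulKVg.
  apply: subgrp_mul; [apply: subgrp_mul|].
  - exact/subgrp_seq_catl/quot_FA.
  - by apply: subgrp_gen; apply: List.in_or_app; right; apply: List.in_or_app; right; left.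
  - exact/subgrp_seq_catr/subgrp_seq_catl/quot_FB.
move=> x y [Ax|Bx] [Ay|By].
- exact/subgrp_seq_catl/quot_FA.
- exact: across.
- by rewrite -[y]pv_invgK -pv_invMg; apply/subgrp_inv/across.
- exact/subgrp_seq_catr/subgrp_seq_catl/quot_FB.
Qed.

Lemma quot_fg_prod (A B : PVX -> Prop) : quot_fg A -> quot_fg B ->
  quot_fg (fun w => exists u v, A u /\ B v /\ w = u ** v).
Proof.
move=> [FA [FA_quot quot_FA]] [FB [FB_quot quot_FB]].
have [[[a Aa] [b Bb]] | noAB] := classic ((exists a, A a) /\ (exists b, B b)); last first.
  apply: quot_fg_empty => w [u [v [Au [Bv _]]]].
  by apply: noAB; split; [exists u | exists v].
exists (map (pv_conj b) FA ++ FB); split.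
  move=> f /List.in_app_iff [/List.in_map_iff [g [<- /FA_quot Ag]] | /FB_quot].
  - apply: subgrp_bind (subgrp_conj b Ag) => _ [_ [x [y [Ax Ay ->]]] ->].
    apply: subgrp_gen; exists (x ** b), (y ** b).
    split; [by exists x, b | by exists y, b |].
    by rewrite /pv_conj pv_invMg !pv_mulgA.
  - apply: subgrp_mono => _ [x [y [Bx By ->]]].
    exists (a ** x), (a ** y); split; [by exists a, x | by exists a, y |].
    by rewrite pv_invMg -pv_mulgA pv_mulKg.
move=> _ _ [x1 [y1 [Ax1 [By1 ->]]]] [x2 [y2 [Ax2 [By2 ->]]]].
have -> : inv (x1 ** y1) ** (x2 ** y2) =
          inv y1 ** b ** pv_conj b (inv x1 ** x2) ** (inv b ** y2).
  by rewrite /pv_conj pv_invMg !pv_mulgA !pv_mulgK.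
apply: subgrp_mul; [apply: subgrp_mul|].
- exact/subgrp_seq_catr/quot_FB.
- apply: subgrp_bind (subgrp_conj b (quot_FA _ _ Ax1 Ax2)) => _ [g Fg ->].
  by apply/subgrp_seq_catl/subgrp_gen/List.in_map.
- exact/subgrp_seq_catr/quot_FB.
Qed.

Lemma quot_fg_plus (A : PVX -> Prop) : quot_fg A -> quot_fg (splus A).
Proof.
move=> [F [F_quot quot_F]].
have [[a Aa] | noA] := classic (exists a, A a); last first.
  by apply: quot_fg_empty => w /splus_inhabited.
have A_sub := splus_sub_subgrp_cons Aa quot_F.
exists (a :: F); split.
- move=> f [<- | /F_quot].
  + apply: subgrp_gen; exists a, (a ** a); split; [exact: SP_base | |by rewrite pv_mulKg].
    exact: SP_mul (SP_base _) (SP_base _).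
  + by apply: subgrp_quot_mono => w; exact: SP_base.
- by move=> x y /A_sub sx /A_sub sy; exact: subgrp_mul (subgrp_inv _) _.
Qed.

Lemma rationalK_quot_fg (L : PVX -> Prop) : rationalK L -> quot_fg L.
Proof.
elim=> {L} [|a _|A B _ fgA _ fgB|A B _ fgA _ fgB|A _ fgA|A B _ fgA AB].
- by apply: quot_fg_empty => w [].
- exact: quot_fg_single.
- exact: quot_fg_union.
- exact: quot_fg_prod.
- exact: quot_fg_plus.
- exact: quot_fg_ext AB fgA.
Qed.

Lemma subgrp_seq_sub_fg_subgroup (G : seq PVX) a : OmegaS kappa pv_one ->
  forall w, subgrp_seq G w -> fg_subgroup (fun i : 'I_(size G) => nth a G i) w.
Proof.
move=> O1; apply: subgrp_min; first exact: kappa_closed_genS.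
  by apply: GS_base; right; split; last exact: pv_mul1g.
by move=> w /(In_nth_ord a) [i ->]; apply: GS_base; left; exists i.
Qed.

Lemma fg_subgroup_sub_genS k (F : 'I_k -> PVX) (L : PVX -> Prop) a : L a ->
  (forall i, genS kappa L (F i)) -> forall w, fg_subgroup F w -> genS kappa L w.
Proof.
move=> La FL; apply: genS_min => _ [[i ->] | [_ /pv_idem_one ->]] //.
exact: kappa_closed_one (kappa_closed_genS L) (GS_base _ La).
Qed.

Hypothesis fg_subgroup_closed : forall k (F : 'I_k -> PVX),
  (forall i, OmegaS kappa (F i)) ->
  forall w, clos kappa (fg_subgroup F) w -> fg_subgroup F w.

Lemma clos_splus_sub_genS (L : PVX -> Prop) : rationalK L ->
  forall w, clos kappa (splus L) w -> genS kappa L w.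
Proof.
move=> ratL w closw.
have [a La] : exists a, L a.
  by have [b [/splus_inhabited]] := proj2 closw 0 (ffun0 (card_ord 0)).
have [F [F_quot quot_F]] := rationalK_quot_fg ratL.
have gens_in (Q : PVX -> Prop) : kappa_closed Q -> (forall v, L v -> Q v) ->
    forall i : 'I_(size (a :: F)), Q (nth a (a :: F) i).
  move=> kQ LQ i; case: (nth_In_ord a i) => [<- | /F_quot /(subgrp_quot_sub kQ La LQ)] //.
  exact: LQ.
apply: (fg_subgroup_sub_genS La).
  by apply: gens_in (kappa_closed_genS L) _ => v; exact: GS_base.
apply: fg_subgroup_closed; first exact: gens_in kappa_closed_OmegaS (rationalK_OmegaS ratL).
apply: (clos_mono _ closw) => v /(splus_sub_subgrp_cons La quot_F).
apply: subgrp_seq_sub_fg_subgroup.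
exact: kappa_closed_one kappa_closed_OmegaS (rationalK_OmegaS ratL La).
Qed.

End Subgroups.

Theorem lemma4p5 (sigma : forall n, IOp n -> Prop) (V : FinSg -> Prop)
    (X : finType) :
  pseudovariety V -> implicit_signature sigma ->
  (forall L : PV V X -> Prop, (forall w, L w -> OmegaS sigma w) ->
     set_eq (clos sigma (splus L)) (genS sigma L) ->
     set_eq (clos sigma (splus L)) (genS sigma (clos sigma L))) /\
  (group_pseudovariety V -> LERF V ->
   forall L : PV V X -> Prop, rationalK L ->
     set_eq (clos kappa (splus L)) (genS kappa L)).
Proof.
(* Part (i) holds for any class V and any set of operations sigma. *)
move=> _ _; split; first exact: clos_splus_genS_clos.
move=> [_ V_group] lerf L ratL w; split.
- exact: (clos_splus_sub_genS V_group (lerf X) ratL).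
- by apply: genS_sub_clos_splus => v; exact: rationalK_OmegaS.
Qed.
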